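(* Let $N$ be an $r\times r$ indecomposable generalised Cartan matrix, and let $\mathfrak h$, $\alpha_i$, $Z$, $\mathcal A$, $F$, $v_1,\dots,v_r$ be as in the context. If Problem 2 has a solution, then $\ker F=Z$.
   Context: A generalised Cartan matrix is $N=[n(i,j)]_{1\le i,j\le r}$ with $n(i,j)\in\mathbb Z$, $n(i,i)=2$, $n(i,j)\le 0$ for $i\neq j$, and $n(i,j)=0\iff n(j,i)=0$; it is indecomposable if there is no partition of $\{1,\dots,r\}$ into two nonempty sets $I,J$ with $n(i,j)=0$ for all $i\in I,j\in J$. Let $s$ be the corank of $N$, $\mathfrak h$ the complex vector space with basis $H_1,\dots,H_{r+s}$, $\alpha_1,\dots,\alpha_r\in\mathfrak h^*$ linearly independent with $\alpha_j(H_i)=n(i,j)$ for $1\le i,j\le r$, and $Z=\bigcap_i\ker\alpha_i$. $\mathcal A$ is a complex commutative algebra, $\mathrm{Der}(\mathcal A)$ its Lie algebra of derivations; for $a\in\mathcal A$, $D\in\mathrm{Der}(\mathcal A)$, $aD$ is $b\mapsto aD(b)$. $F:\mathfrak h\to\mathrm{Der}(\mathcal A)$ is a Lie algebra homomorphism ($\mathfrak h$ abelian) and $v_1,\dots,v_r\in\mathcal A$ are invertible with $F(H)(v_i)=\alpha_i(H)v_i$ for all $H\in\mathfrak h$. Problem 2 has a solution means: there exist $\delta_1,\dots,\delta_r,\delta_{-1},\dots,\delta_{-r}\in\mathrm{Im}\,F$ such that, with $\mathbf X_i=v_i\delta_i$, $\mathbf X_{-i}=v_i^{-1}\delta_{-i}$,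 one has $[F(H_a),F(H_b)]=0$, $[\mathbf X_i,\mathbf X_{-i}]=F(H_i)$, $[\mathbf X_i,\mathbf X_{-j}]=0$ for $i\neq j$, and $[F(H_a),\mathbf X_{\pm j}]=\pm\alpha_j(H_a)\mathbf X_{\pm j}$. *)

From HB Require Import structures.
From mathcomp Require Import all_boot all_order all_algebra.
From mathcomp Require Import complex reals.
Set Implicit Arguments. Unset Strict Implicit. Unset Printing Implicit Defensive.
Import Order.TTheory GRing.Theory Num.Theory.
Local Open Scope ring_scope.

Definition gen_cartan (r : nat) (N : 'M[int]_r) : Prop :=
  [/\ forall i, N i i = 2,
      forall i j, i != j -> N i j <= 0 &
      forall i j, N i j = 0 <-> N j i = 0].

Definition indecomposable (r : nat) (N : 'M[int]_r) : Prop :=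
  ~ exists I : {set 'I_r},
      [/\ I != set0, ~: I != set0 &
          forall i j, i \in I -> j \in ~: I -> N i j = 0].

Definition corank (C : fieldType) (r : nat) (N : 'M[int]_r) : nat :=
  (r - \rank (map_mx (fun z : int => z%:~R : C) N))%N.

Definition is_derivation (C : pzRingType) (A : comUnitAlgType C) (D : A -> A) : Prop :=
  (forall (c : C) (x y : A), D (c *: x + y) = c *: D x + D y) /\
  (forall x y : A, D (x * y) = x * D y + D x * y).

Definition opbr (A : zmodType) (P Q : A -> A) : A -> A := fun a => P (Q a) - Q (P a).

Section Problem2.
Variables (C : fieldType) (A : comUnitAlgType C) (r s : nat).
(* h = C^(r+s) with standard basis H_a = delta_mx 0 a;
   alpha is the (r+s) x r matrix with alpha_j(H) = (H *m alpha) 0 j. *)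
Variables (alpha : 'M[C]_(r + s, r)) (F : 'rV[C]_(r + s) -> A -> A) (v : 'I_r -> A).

Definition Hb (a : 'I_(r + s)) : 'rV[C]_(r + s) := delta_mx 0 a.
Definition alphaf (j : 'I_r) (H : 'rV[C]_(r + s)) : C := (H *m alpha) 0 j.

(* delta_i = F (Kp i), delta_{-i} = F (Km i) are elements of Im F. *)
Definition Xp (Kp : 'I_r -> 'rV[C]_(r + s)) (i : 'I_r) : A -> A :=
  fun a => v i * F (Kp i) a.
Definition Xm (Km : 'I_r -> 'rV[C]_(r + s)) (i : 'I_r) : A -> A :=
  fun a => (v i)^-1 * F (Km i) a.

Definition problem2_has_solution : Prop :=
  exists Kp Km : 'I_r -> 'rV[C]_(r + s),
    [/\ forall a b x, opbr (F (Hb a)) (F (Hb b)) x = 0,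
        forall i x, opbr (Xp Kp i) (Xm Km i) x = F (Hb (lshift s i)) x,
        forall i j x, i != j -> opbr (Xp Kp i) (Xm Km j) x = 0,
        forall a j x, opbr (F (Hb a)) (Xp Kp j) x = alphaf j (Hb a) *: Xp Kp j x &
        forall a j x, opbr (F (Hb a)) (Xm Km j) x = - alphaf j (Hb a) *: Xm Km j x].
End Problem2.

From HB Require Import structures.
From mathcomp Require Import all_boot all_order all_algebra.
From mathcomp Require Import complex reals.
From mathcomp Require Import ring zify.
Set Implicit Arguments. Unset Strict Implicit. Unset Printing Implicit Defensive.
Import Order.TTheory GRing.Theory Num.Theory.
Local Open Scope ring_scope.

(* Write delta_i = F K_i and delta_(-i) = F K_(-i).  Since the F H are commuting
   derivations and v_j has weight alpha_j,
     [X_i, X_(-j)] = - v_i v_j^-1 F (alpha_j(K_i) K_(-j) + alpha_i(K_(-j)) K_i),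
   so the relations of Problem 2 exhibit explicit vectors of ker F, and
   ker F <= Z since the v_j are invertible eigenvectors.  Evaluating the
   alpha_j on these vectors gives p_i q_i = -1 for p_i = alpha_i(K_i),
   q_i = alpha_i(K_(-i)), and shows that "i <> j and alpha_j(K_i) <> 0" is a
   directed graph E with in- and out-degrees at most 1 and N = 2 - E - E^T.
   For c in the left kernel of N the hermitian form sum_ij N_ij c_i c_j^* = 0
   is a sum of nonnegative terms, so c is constant along edges and vanishes at
   vertices of in- or out-degree 0; this is exactly what is needed to write
   sum_i c_i H_i as a combination of the kernel vectors above.  Finally, since
   alpha has rank r and N has corank s, an H in Z has no component along
   H_(r+1), ..., H_(r+s), and its first r coordinates are in the left kernel
   of N. *)

Section Derivation.
Variables (C : fieldType) (A : comUnitAlgType C) (D : A -> A).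
Hypothesis derD : is_derivation D.

Lemma derivationM x y : D (x * y) = x * D y + D x * y.
Proof. by case: derD. Qed.

Lemma derivation1 : D 1 = 0.
Proof.
have := derivationM 1 1; rewrite !mul1r mulr1 => D1.
by apply: (addIr (D 1)); rewrite add0r -D1.
Qed.

Lemma derivationV_eigen (u : A) (a : C) :
  u \is a GRing.unit -> D u = a *: u -> D u^-1 = - (a *: u^-1).
Proof.
move=> u_unit Du.
have := derivationM u u^-1; rewrite divrr // derivation1 Du -scalerAl divrr //.
move/eqP; rewrite eq_sym addr_eq0 => /eqP/(congr1 (GRing.mul u^-1)).
by rewrite mulrA mulVr // mul1r => ->; rewrite mulrN -scalerAr mulr1.
Qed.

End Derivation.

Lemma opbr_twisted_derivations (C : fieldType) (A : comUnitAlgType C)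
    (D1 D2 : A -> A) (u w : A) (a1 a2 : C) :
  is_derivation D1 -> is_derivation D2 -> (forall x, D1 (D2 x) = D2 (D1 x)) ->
  u \is a GRing.unit -> w \is a GRing.unit -> D1 w = a1 *: w -> D2 u = a2 *: u ->
  forall x, opbr (fun y => u * D1 y) (fun y => w^-1 * D2 y) x
            = - (u * w^-1) * (a1 *: D2 x + a2 *: D1 x).
Proof.
move=> der1 der2 D12 u_unit w_unit Dw Du x.
rewrite /opbr (derivationM der1) (derivationM der2) (derivationV_eigen der1 w_unit Dw).
(* Turn scalings into products in A so that the identity becomes one of [ring]. *)
rewrite Du D12 -(mulr_algl a1 w^-1) -(mulr_algl a2 u).
rewrite -(mulr_algl a1 (D2 x)) -(mulr_algl a2 (D1 x)).
move: (a1%:A) (a2%:A) (w^-1) (D2 x) (D1 x) (D2 (D1 x)) => e1 e2 wi X Z Y; ring.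
Qed.

Lemma cartan_form_sum_sqr (C : numClosedFieldType) r (e : 'I_r -> 'I_r -> C)
    (c : 'I_r -> C) :
  \sum_i \sum_j ((i == j)%:R * 2 - e j i - e i j) * (c i * (c j)^*) =
    \sum_i \sum_j e i j * `|c i - c j| ^+ 2
  + \sum_i (1 - \sum_j e i j) * `|c i| ^+ 2 + \sum_j (1 - \sum_i e i j) * `|c j| ^+ 2.
Proof.
pose x i j := c i * (c j)^*.
have diag : \sum_i \sum_j (i == j)%:R * 2 * x i j = \sum_i 2 * `|c i| ^+ 2.
  apply: eq_bigr => i _; rewrite (bigD1 i) //= big1 => [|j]; last first.
    by rewrite eq_sym => /negbTE ->; rewrite !mul0r.
  by rewrite eqxx normCK /x /=; ring.
transitivity (\sum_i 2 * `|c i| ^+ 2 - \sum_i \sum_j e i j * x j i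
                                     - \sum_i \sum_j e i j * x i j).
  rewrite -diag [\sum_i \sum_j e i j * x j i]exchange_big -!sumrB.
  by apply: eq_bigr => i _; rewrite -!sumrB; apply: eq_bigr => j _; rewrite /x; ring.
have out_sum : \sum_i (1 - \sum_j e i j) * `|c i| ^+ 2
    = \sum_i `|c i| ^+ 2 - \sum_i \sum_j e i j * `|c i| ^+ 2.
  by rewrite -sumrB; apply: eq_bigr => i _; rewrite mulrBl mul1r mulr_suml.
have in_sum : \sum_j (1 - \sum_i e i j) * `|c j| ^+ 2
    = \sum_j `|c j| ^+ 2 - \sum_i \sum_j e i j * `|c j| ^+ 2.
  rewrite [X in _ - X]exchange_big -sumrB /=.
  by apply: eq_bigr => j _; rewrite mulrBl mul1r mulr_suml.
have edge_sum : \sum_i \sum_j e i j * `|c i - c j| ^+ 2 =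
    \sum_i \sum_j e i j * `|c i| ^+ 2 + \sum_i \sum_j e i j * `|c j| ^+ 2
    - \sum_i \sum_j e i j * x i j - \sum_i \sum_j e i j * x j i.
  rewrite -!big_split -!sumrB /=; apply: eq_bigr => i _.
  rewrite -!big_split -!sumrB /=; apply: eq_bigr => j _.
  by rewrite !normCK rmorphB /x; ring.
have twice : \sum_i 2 * `|c i| ^+ 2 = \sum_i `|c i| ^+ 2 + \sum_i `|c i| ^+ 2.
  by rewrite -big_split; apply: eq_bigr => i _ /=; ring.
by rewrite edge_sum out_sum in_sum twice; ring.
Qed.

Lemma mulmx_col_mx_eq0 (K : fieldType) m n s (T : 'M[K]_(m, n)) (B : 'M[K]_(s, n))
    (H : 'rV[K]_(m + s)) :
  (\rank T + s <= \rank (col_mx T B))%N -> H *m col_mx T B = 0 ->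
  rsubmx H = 0 /\ lsubmx H *m T = 0.
Proof.
move=> rkTB HTB.
have := mxrank_sum_cap T B; rewrite (fst (addsmxE T B)).
have := rank_leq_row B => rkB sum_cap.
have freeB : row_free B by rewrite /row_free eqn_leq rkB; lia.
have cap0 : (T :&: B)%MS = 0 by apply/eqP; rewrite -mxrank_eq0; apply/eqP; lia.
have HB : rsubmx H *m B = - (lsubmx H *m T).
  by apply/eqP; rewrite -addr_eq0 addrC -mul_row_col hsubmxK HTB.
have HB0 : rsubmx H *m B = 0.
  apply/eqP; rewrite -submx0 -cap0 sub_capmx submxMl andbT HB -mulNmx.
  exact: submxMl.
have Hr : rsubmx H = 0 by apply/eqP; rewrite -(mulmx_free_eq0 _ freeB) HB0.
by split=> //; apply/eqP; rewrite -oppr_eq0 -HB HB0.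
Qed.

Lemma row_mx0_sum_delta (K : pzRingType) m n (c : 'rV[K]_m) :
  row_mx c (0 : 'rV_n) = \sum_(i < m) c 0 i *: delta_mx 0 (lshift n i).
Proof.
rewrite {1}[row_mx c 0]row_sum_delta big_split_ord /= [X in _ + X]big1 ?addr0.
  by apply: eq_bigr => i _; rewrite row_mxEl.
by move=> j _; rewrite row_mxEr mxE scale0r.
Qed.

Lemma mulr_sqr_norm_eq0 (C : numDomainType) (a z : C) : a * `|z| ^+ 2 = 0 -> a * z = 0.
Proof.
by move/eqP; rewrite mulf_eq0 sqrf_eq0 normr_eq0 => /orP[]/eqP->; rewrite ?mul0r ?mulr0.
Qed.

Section ProblemTwo.
Variables (C : numClosedFieldType) (A : comUnitAlgType C) (r s : nat).
Variables (N : 'M[int]_r) (alpha : 'M[C]_(r + s, r)).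
Variables (F : 'rV[C]_(r + s) -> A -> A) (v : 'I_r -> A).
Hypothesis HFlin : forall (c : C) H H' x, F (c *: H + H') x = c *: F H x + F H' x.
Hypothesis Hvunit : forall i, v i \is a GRing.unit.
Hypothesis Hveig : forall H i, F H (v i) = alphaf alpha i H *: v i.

Local Notation al := (alphaf alpha).
Local Notation coroot i := (Hb C (lshift s i)).

Definition kerF (H : 'rV[C]_(r + s)) := forall x, F H x = 0.

Lemma FD H H' x : F (H + H') x = F H x + F H' x.
Proof. by have := HFlin 1 H H' x; rewrite !scale1r. Qed.

Lemma F0 x : F 0 x = 0.
Proof. by apply: (addIr (F 0 x)); rewrite -FD !addr0 add0r. Qed.

Lemma FZ c H x : F (c *: H) x = c *: F H x.
Proof. by rewrite -[c *: H]addr0 HFlin F0 addr0. Qed.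

Lemma kerF0 : kerF 0.
Proof. exact: F0. Qed.

Lemma kerFD H H' : kerF H -> kerF H' -> kerF (H + H').
Proof. by move=> kH kH' x; rewrite FD kH kH' addr0. Qed.

Lemma kerFZ c H : kerF H -> kerF (c *: H).
Proof. by move=> kH x; rewrite FZ kH scaler0. Qed.

Lemma kerFN H : kerF H -> kerF (- H).
Proof. by rewrite -scaleN1r; apply: kerFZ. Qed.

Lemma kerFB H H' : kerF H -> kerF H' -> kerF (H - H').
Proof. by move=> kH /kerFN; apply: kerFD. Qed.

Lemma kerF_sum (I : finType) (H : I -> 'rV[C]_(r + s)) :
  (forall i, kerF (H i)) -> kerF (\sum_i H i).
Proof. by move=> kH; apply: big_ind => //; [apply: kerF0 | apply: kerFD]. Qed.

Lemma alphafD j H H' : al j (H + H') = al j H + al j H'.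
Proof. by rewrite /alphaf mulmxDl mxE. Qed.

Lemma alphafZ j c H : al j (c *: H) = c * al j H.
Proof. by rewrite /alphaf -scalemxAl mxE. Qed.

Lemma alphaf_kerF j H : kerF H -> al j H = 0.
Proof.
move=> kH; have /eqP := Hveig H j; rewrite kH eq_sym scaler_eq0 => /orP[/eqP //|].
by move/eqP=> vj0; have := Hvunit j; rewrite vj0 unitr0.
Qed.

Hypothesis Halpha_N : forall i j, alpha (lshift s i) j = (N i j)%:~R.

Lemma alphaf_coroot i j : al j (coroot i) = (N i j)%:~R.
Proof. by rewrite /alphaf /Hb -rowE mxE Halpha_N. Qed.

Variables (Kp Km : 'I_r -> 'rV[C]_(r + s)).
Hypothesis HFder : forall H, is_derivation (F H).
Hypothesis HFcomm : forall H H' x, F H (F H' x) = F H' (F H x).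

Lemma opbr_XpXm i j x : opbr (Xp F v Kp i) (Xm F v Km j) x =
  - (v i * (v j)^-1) * F (al j (Kp i) *: Km j + al i (Km j) *: Kp i) x.
Proof. by rewrite HFlin FZ; apply: opbr_twisted_derivations. Qed.

Local Notation p i := (al i (Kp i)).
Local Notation q i := (al i (Km i)).

Hypothesis HXpXm : forall i x, opbr (Xp F v Kp i) (Xm F v Km i) x = F (coroot i) x.
Hypothesis HXpXm_neq : forall i j x, i != j -> opbr (Xp F v Kp i) (Xm F v Km j) x = 0.

Lemma kerF_coroot i : kerF (coroot i + p i *: Km i + q i *: Kp i).
Proof. by move=> x; rewrite -addrA FD -HXpXm opbr_XpXm divrr // mulN1r addNr. Qed.

Lemma kerF_offdiag i j : i != j -> kerF (al j (Kp i) *: Km j + al i (Km j) *: Kp i).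
Proof.
move=> ij x; have := HXpXm_neq x ij; rewrite opbr_XpXm mulNr => /eqP; rewrite oppr_eq0 => /eqP prod0.
have vij_unit : v i * (v j)^-1 \is a GRing.unit by rewrite unitrM Hvunit unitrV Hvunit.
by apply: (mulrI vij_unit); rewrite prod0 mulr0.
Qed.

Hypothesis HNd : forall i, N i i = 2.

Lemma mul_pq i : p i * q i = -1.
Proof.
have := alphaf_kerF i (kerF_coroot i).
rewrite !alphafD !alphafZ alphaf_coroot HNd => pq2.
have : (p i * q i + 1) * 2%:R = 0 by rewrite -pq2; ring.
by move/eqP; rewrite mulf_eq0 pnatr_eq0 orbF addr_eq0 => /eqP.
Qed.

Lemma p_neq0 i : p i != 0.
Proof. by apply/eqP=> p0; have /eqP := mul_pq i; rewrite p0 mul0r eq_sym oppr_eq0 oner_eq0. Qed.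

Lemma q_neq0 i : q i != 0.
Proof. by apply/eqP=> q0; have /eqP := mul_pq i; rewrite q0 mulr0 eq_sym oppr_eq0 oner_eq0. Qed.

Definition edge i j := (i != j) && (al j (Kp i) != 0).

Lemma alphaf_offdiag i j : i != j ->
  al j (Kp i) = - ((edge i j)%:R * p i) /\ al i (Km j) = - ((edge i j)%:R * q j).
Proof.
move=> ij; have kij := kerF_offdiag ij.
have := alphaf_kerF j kij; have := alphaf_kerF i kij; rewrite !alphafD !alphafZ.
rewrite /edge ij /=; set x := al j (Kp i); set y := al i (Km j) => alpha_i0 alpha_j0.
have [x0 | xn0] /= := eqVneq x 0.
  move: alpha_i0; rewrite x0 mul0r add0r => /eqP; rewrite mulf_eq0 (negbTE (p_neq0 i)) orbF.
  by move/eqP->; rewrite !mul0r oppr0.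
have y_eq : y = - q j.
  by apply/eqP; rewrite -addr_eq0 addrC; apply/eqP/(mulfI xn0); rewrite mulr0 -alpha_j0; ring.
split; last by rewrite y_eq mul1r.
have /eqP : y * (x + p i) = 0 by rewrite -alpha_i0; ring.
rewrite mulf_eq0 y_eq oppr_eq0 (negbTE (q_neq0 j)) addr_eq0 => /eqP ->.
by rewrite mul1r.
Qed.

Lemma cartan_edge i j :
  (N i j)%:~R = (i == j)%:R * 2 - (edge j i)%:R - (edge i j)%:R :> C.
Proof.
have [<- | ij] := eqVneq i j; first by rewrite HNd /edge eqxx /= mul1r !subr0.
have := alphaf_kerF j (kerF_coroot i); rewrite !alphafD !alphafZ alphaf_coroot.
have ji : j != i by rewrite eq_sym.
have [_ ->] := alphaf_offdiag ji; have [-> _] := alphaf_offdiag ij.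
move/eqP; rewrite -addrA addr_eq0 => /eqP ->.
have pq := mul_pq i; have qp : q i * p i = -1 by rewrite mulrC.
rewrite !mulrN mulrCA pq mulrCA qp mulr0n mul0r sub0r.
by move: (edge j i)%:R (edge i j)%:R => a b; ring.
Qed.

Lemma edge_excl i j k : edge i j -> k != i -> k != j -> ~~ edge i k && ~~ edge k j.
Proof.
move=> eij ki kj; have ij : i != j by case/andP: eij.
have ik : i != k by rewrite eq_sym.
have := alphaf_kerF k (kerF_offdiag ij); rewrite alphafD !alphafZ.
have [-> ->] := alphaf_offdiag ij; have [_ ->] := alphaf_offdiag kj.
have [-> _] := alphaf_offdiag ik; rewrite eij => sum0.
have /eqP : ((edge k j + edge i k)%N%:R : C) * (p i * q j) = 0.
  by rewrite -sum0 natrD /=; move: (edge k j)%:R (edge i k)%:R => a b; ring.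
rewrite mulf_eq0 mulf_eq0 (negbTE (p_neq0 i)) (negbTE (q_neq0 j)) !orbF pnatr_eq0.
by rewrite addn_eq0 !eqb0 andbC.
Qed.

Lemma outdeg_le1 i : \sum_j ((edge i j)%:R : C) <= 1.
Proof.
have [j eij | no_edge] := pickP (edge i); last first.
  by rewrite big1 ?ler01 // => j _; rewrite no_edge.
rewrite (bigD1 j) //= eij big1 ?addr0 // => k kj.
have [-> | ki] := eqVneq k i; first by rewrite /edge eqxx.
by have /andP[/negbTE -> _] := edge_excl eij ki kj.
Qed.

Lemma indeg_le1 j : \sum_i ((edge i j)%:R : C) <= 1.
Proof.
have [i eij | no_edge] := pickP (edge^~ j); last first.
  by rewrite big1 ?ler01 // => i _; rewrite no_edge.
rewrite (bigD1 i) //= eij big1 ?addr0 // => k ki.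
have [-> | kj] := eqVneq k j; first by rewrite /edge eqxx.
by have /andP[_ /negbTE ->] := edge_excl eij ki kj.
Qed.

Lemma left_kernel_edge (c : 'I_r -> C) :
    (forall j, \sum_i c i * (N i j)%:~R = 0) ->
  [/\ forall i j, edge i j -> c i = c j,
      forall i, c i = \sum_j (edge i j)%:R * c i &
      forall j, c j = \sum_i (edge i j)%:R * c j].
Proof.
move=> cN; pose e i j : C := (edge i j)%:R.
have : \sum_i \sum_j e i j * `|c i - c j| ^+ 2
    + \sum_i (1 - \sum_j e i j) * `|c i| ^+ 2 + \sum_j (1 - \sum_i e i j) * `|c j| ^+ 2 = 0.
  rewrite -cartan_form_sum_sqr exchange_big big1 // => j _ /=.
  under eq_bigr do rewrite -cartan_edge mulrA (mulrC _ (c _)).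
  by rewrite -mulr_suml cN mul0r.
have sqr_ge0 (z : C) : 0 <= `|z| ^+ 2 by apply/exprn_ge0/normr_ge0.
have edge_ge0 i j : 0 <= e i j * `|c i - c j| ^+ 2 by rewrite mulr_ge0 ?ler0n.
have out_ge0 i : 0 <= (1 - \sum_j e i j) * `|c i| ^+ 2.
  by rewrite mulr_ge0 // subr_ge0 outdeg_le1.
have in_ge0 j : 0 <= (1 - \sum_i e i j) * `|c j| ^+ 2.
  by rewrite mulr_ge0 // subr_ge0 indeg_le1.
have edges_ge0 i : 0 <= \sum_j e i j * `|c i - c j| ^+ 2 by rewrite sumr_ge0.
move/eqP; rewrite !paddr_eq0 ?addr_ge0 ?sumr_ge0 //.
move=> /andP[/andP[/eqP edges0 /eqP out0] /eqP in0]; split.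
- move=> i j eij; have /(psumr_eq0P (fun i _ => edges_ge0 i)) /(_ i isT) := edges0.
  move/(psumr_eq0P (fun j _ => edge_ge0 i j))/(_ j isT)/mulr_sqr_norm_eq0.
  by rewrite /e eij mul1r => /eqP; rewrite subr_eq0 => /eqP.
- move=> i; have := psumr_eq0P (fun i _ => out_ge0 i) out0 (i := i) isT.
  by move/mulr_sqr_norm_eq0/eqP; rewrite mulrBl mul1r mulr_suml subr_eq0 => /eqP.
- move=> j; have := psumr_eq0P (fun j _ => in_ge0 j) in0 (i := j) isT.
  by move/mulr_sqr_norm_eq0/eqP; rewrite mulrBl mul1r mulr_suml subr_eq0 => /eqP.
Qed.

Lemma kerF_edge i j : edge i j -> kerF (q i *: Kp i + p j *: Km j).
Proof.
move=> eij; have ij : i != j by case/andP: eij.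
have := kerFZ (p j * q i) (kerF_offdiag ij).
have [-> ->] := alphaf_offdiag ij; rewrite eij !mul1r scalerDr !scalerA addrC.
have -> : p j * q i * - p i = p j by rewrite mulrN -mulrA (mulrC (q i)) mul_pq mulrN1 opprK.
by rewrite mulrN mulrAC mul_pq mulN1r opprK.
Qed.

Lemma kerF_left_kernel (c : 'I_r -> C) :
  (forall j, \sum_i c i * (N i j)%:~R = 0) -> kerF (\sum_i c i *: coroot i).
Proof.
move=> cN; have [c_edge c_out c_in] := left_kernel_edge cN.
have -> : \sum_i c i *: coroot i =
    \sum_i c i *: (coroot i + p i *: Km i + q i *: Kp i)
  - \sum_i c i *: (p i *: Km i + q i *: Kp i).
  by rewrite -sumrB; apply: eq_bigr => i _; rewrite -scalerBr -[_ + _ + _]addrA addrK.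
apply: kerFB; first by apply: kerF_sum => i; apply/kerFZ/kerF_coroot.
have -> : \sum_i c i *: (p i *: Km i + q i *: Kp i) =
    \sum_i \sum_j (edge i j)%:R *: (c i *: (q i *: Kp i + p j *: Km j)).
  rewrite (eq_bigr _ (fun i _ => scalerDr _ _ _)) big_split /= addrC.
  under [X in X + _]eq_bigr do rewrite [c _]c_out scaler_suml.
  under [X in _ + X]eq_bigr do rewrite [c _]c_in scaler_suml.
  rewrite [X in _ + X]exchange_big -big_split /=; apply: eq_bigr => i _.
  rewrite -big_split /=; apply: eq_bigr => j _.
  case eij: (edge i j); last by rewrite !scale0r !mul0r !scale0r addr0.
  by rewrite (c_edge _ _ eij) !mul1r !scale1r scalerDr.
apply: kerF_sum => i; apply: kerF_sum => j.
by case eij: (edge i j); [rewrite scale1r; apply/kerFZ/kerF_edge | rewrite scale0r; apply: kerF0].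
Qed.


Lemma kerF_row_mx (c : 'rV[C]_r) :
  c *m map_mx (fun z : int => z%:~R) N = 0 -> kerF (row_mx c (0 : 'rV_s)).
Proof.
move=> cN; rewrite row_mx0_sum_delta; apply: kerF_left_kernel => j.
have := congr1 (fun M : 'rV_r => M 0 j) cN; rewrite !mxE => cNj.
by rewrite -[RHS]cNj; apply: eq_bigr => i _; rewrite mxE.
Qed.

End ProblemTwo.

Theorem corollary3p10
  (R : realType) (r : nat) (N : 'M[int]_r)
  (HN : gen_cartan N) (Hind : indecomposable N)
  (A : comUnitAlgType R[i])
  (alpha : 'M[R[i]]_(r + corank R[i] N, r))
  (Halpha_indep : row_free alpha^T)
  (Halpha_N : forall i j : 'I_r, alpha (lshift (corank R[i] N) i) j = (N i j)%:~R)
  (F : 'rV[R[i]]_(r + corank R[i] N) -> A -> A)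
  (HFder : forall H, is_derivation (F H))
  (HFlin : forall (c : R[i]) H H' x, F (c *: H + H') x = c *: F H x + F H' x)
  (HFcomm : forall H H' x, F H (F H' x) = F H' (F H x))
  (v : 'I_r -> A)
  (Hvunit : forall i, v i \is a GRing.unit)
  (Hveig : forall H i, F H (v i) = alphaf alpha i H *: v i)
  (Hsol : problem2_has_solution alpha F v) :
  forall H : 'rV[R[i]]_(r + corank R[i] N),
    (forall x, F H x = 0) <-> (forall j, alphaf alpha j H = 0).
Proof.
move=> H; split=> [kerH j | alphaH0]; first exact: (alphaf_kerF Hvunit Hveig).
have [HNd _ _] := HN; have [Kp [Km [_ HXpXm HXpXm_neq _ _]]] := Hsol.
pose NC := map_mx (fun z : int => z%:~R : R[i]) N.
have alphaE : alpha = col_mx NC (dsubmx alpha).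
  by rewrite -[LHS]vsubmxK; congr col_mx; apply/matrixP => i j; rewrite !mxE Halpha_N.
have rk_alpha : (\rank NC + corank R[i] N <= \rank (col_mx NC (dsubmx alpha)))%N.
  move: Halpha_indep; rewrite -alphaE /row_free mxrank_tr => /eqP ->.
  by rewrite /corank subnKC ?rank_leq_col.
have H_alpha : H *m col_mx NC (dsubmx alpha) = 0.
  by rewrite -alphaE; apply/rowP => j; rewrite [RHS]mxE; apply: alphaH0.
have [Hr Hl] := mulmx_col_mx_eq0 rk_alpha H_alpha.
rewrite -[H]hsubmxK Hr.
exact: (kerF_row_mx HFlin Hvunit Hveig Halpha_N HFder HFcomm HXpXm HXpXm_neq HNd Hl).
Qed.
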